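(* Let $n\ge 2$. Then $\mathrm{Q}=\mathrm{A}\cap\mathrm{P}=\mathrm{B}\cap\mathrm{P}=\mathrm{A}\cap\mathrm{B}$. Moreover: <ul> <li>if $n\le 3$, then $\mathrm{Q}=\mathrm{P}=\mathrm{Z}^\times(\mathrm{C}^{\times(0)}\cup\mathrm{C}^{\times(1)})$;</li> <li>if $n=4$, then $\mathrm{Q}\ne\mathrm{P}$ and $\mathrm{A}\neq\mathrm{P}$.</li> </ul>
   Context: Let $\mathrm{C}$ be either the real Clifford algebra $C\ell_{p,q}$ with $p+q=n$, or the complex Clifford algebra $C\ell(\mathbb{C}^n)$. It has identity $e$ and generators $e_1,\dots,e_n$ satisfying $e_ae_b+e_be_a=2\eta_{ab}e$. In the real case $\eta=\mathrm{diag}(1,\dots,1,-1,\dots,-1)$ with $p$ entries $+1$ and $q$ entries $-1$. In the complex case $\eta=I_n$. $\mathrm{C}^k$ is the grade-$k$ subspace, spanned by the products $e_{a_1}\cdots e_{a_k}$ with $a_1<\dots<a_k$. The even subspace is $\mathrm{C}^{(0)}=\bigoplus_{k\text{ even}}\mathrm{C}^k$ and the odd subspace is $\mathrm{C}^{(1)}=\bigoplus_{k\text{ odd}}\mathrm{C}^k$. The grade involution $U\mapsto\hat U$ is the linear automorphism acting on $\mathrm{C}^k$ as $(-1)^k$. The reversion $U\mapsto\tilde U$ is the linear anti-automorphism acting on $\mathrm{C}^k$ as $(-1)^{k(k-1)/2}$. For $S\subseteq\mathrm{C}$, $S^\times$ is the set of elements of $S$ invertible in $\mathrm{C}$, and $\mathrm{C}^{\times(j)}:=(\mathrm{C}^{(j)})^\times$.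 $\mathrm{Z}$ is the center: $\mathrm{Z}=\mathrm{C}^0$ for $n$ even and $\mathrm{Z}=\mathrm{C}^0\oplus\mathrm{C}^n$ for $n$ odd. Define: <ul> <li>$\mathrm{P}:=\mathrm{Z}^\times(\mathrm{C}^{\times(0)}\cup\mathrm{C}^{\times(1)})=\{WT: W\in\mathrm{Z}^\times, T\in\mathrm{C}^{\times(0)}\cup\mathrm{C}^{\times(1)}\}$;</li> <li>$\mathrm{A}:=\{T\in\mathrm{C}^\times:\tilde TT\in\mathrm{Z}^\times\}$;</li> <li>$\mathrm{B}:=\{T\in\mathrm{C}^\times:\hat{\tilde T}T\in\mathrm{Z}^\times\}$;</li> <li>$\mathrm{Q}:=\{T\in\mathrm{P}:\tilde TT\in\mathrm{Z}^\times\}$.</li> </ul> *)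

From HB Require Import structures.
From mathcomp Require Import all_boot all_order all_algebra.
From mathcomp Require Import complex.
From mathcomp Require Import reals.
Set Implicit Arguments. Unset Strict Implicit. Unset Printing Implicit Defensive.
Import Order.TTheory GRing.Theory Num.Theory.
Local Open Scope ring_scope.

Section Clifford.
Variables (K : fieldType) (n : nat) (eta : 'I_n -> K).

(* Elements of the Clifford algebra: coordinates on the basis blades
   e_A = e_{a1} ... e_{ak} (a1 < ... < ak), indexed by subsets A of {0..n-1}. *)
Definition clif := {ffun {set 'I_n} -> K}.

(* e_A e_B = (-1)^{#{(a,b) in A x B | b < a}} (prod_{i in A :&: B} eta_i) e_{A (+) B} *)
Definition blade_coef (A B : {set 'I_n}) : K :=
  (-1) ^+ #|[set ab : 'I_n * 'I_n | (ab.1 \in A) && (ab.2 \in B) && (ab.2 < ab.1)%N]|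
  * \prod_(i in A :&: B) eta i.

Definition clif_mul (U V : clif) : clif :=
  [ffun C : {set 'I_n} =>
     \sum_(A : {set 'I_n}) \sum_(B : {set 'I_n} | (A :\: B) :|: (B :\: A) == C)
        U A * V B * blade_coef A B].

Definition clif_one : clif := [ffun A : {set 'I_n} => if A == set0 then 1 else 0].
Definition clif_gen (a : 'I_n) : clif := [ffun A : {set 'I_n} => if A == [set a] then 1 else 0].

Definition grade (k : nat) (U : clif) : Prop := forall A : {set 'I_n}, #|A| != k -> U A = 0.
Definition even_part (U : clif) : Prop := forall A : {set 'I_n}, odd #|A| -> U A = 0.
Definition odd_part (U : clif) : Prop := forall A : {set 'I_n}, ~~ odd #|A| -> U A = 0.

Definition ginv (U : clif) : clif := [ffun A : {set 'I_n} => (-1) ^+ #|A| * U A].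
Definition rev (U : clif) : clif := [ffun A : {set 'I_n} => (-1) ^+ ('C(#|A|, 2)) * U A].

Definition invertible (U : clif) : Prop :=
  exists V, clif_mul U V = clif_one /\ clif_mul V U = clif_one.

Definition center (U : clif) : Prop := forall V, clif_mul U V = clif_mul V U.

Definition Zx (W : clif) : Prop := center W /\ invertible W.
Definition Cx0 (T : clif) : Prop := even_part T /\ invertible T.
Definition Cx1 (T : clif) : Prop := odd_part T /\ invertible T.

Definition Pset (U : clif) : Prop :=
  exists W T, Zx W /\ (Cx0 T \/ Cx1 T) /\ U = clif_mul W T.
Definition Aset (T : clif) : Prop := invertible T /\ Zx (clif_mul (rev T) T).
Definition Bset (T : clif) : Prop := invertible T /\ Zx (clif_mul (ginv (rev T)) T).
Definition Qset (T : clif) : Prop := Pset T /\ Zx (clif_mul (rev T) T).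

Definition clifford_conclusion : Prop :=
  (forall T, Qset T <-> Aset T /\ Pset T) /\
  (forall T, Aset T /\ Pset T <-> Bset T /\ Pset T) /\
  (forall T, Bset T /\ Pset T <-> Aset T /\ Bset T) /\
  ((n <= 3)%N -> forall T, Qset T <-> Pset T) /\
  (n = 4%N -> (exists T, ~ (Qset T <-> Pset T)) /\ (exists T, ~ (Aset T <-> Pset T))).

End Clifford.

Definition eta_pq (K : fieldType) (p q : nat) : 'I_(p + q) -> K :=
  fun i => if (i < p)%N then 1 else -1.

From Pilot Require Import Defs.
From HB Require Import structures.
From mathcomp Require Import all_boot all_order all_algebra.
From mathcomp Require Import complex.
From mathcomp Require Import reals.
From mathcomp Require Import ring.
Set Implicit Arguments. Unset Strict Implicit. Unset Printing Implicit Defensive.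
Import Order.TTheory GRing.Theory Num.Theory.
Local Open Scope ring_scope.

(* The Clifford algebra Cl(eta) over a field K is modelled on coordinate
   functions indexed by subsets of {0..n-1} (the blades e_A), with
   e_A e_B = bc(A, B) e_(A symd B).  The proof runs as follows.
   - bc is a 2-cocycle, so Cl(eta) is an (associative, unital) ring CL; the
     grade involution gi is an automorphism and the reversion rv an
     anti-automorphism of it.
   - If eta_i^2 = 1 and char K = 0, a central element W has components only
     on e_0 and, for n odd, on e_(1..n); hence W + gi W is a scalar.
   - P is the set of products W S, W a central unit and S an even or odd
     unit.  For such T the norms rv T * T and gi (rv T) * T are central
     units times +-(rv S * S), which gives Q = A n P = B n P.
   - Conversely if both norms of T are central units then gi T = k T with k
     central, and (1 + e k) T is even or odd for a sign e making 1 + e k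
     invertible; this gives A n B = P n B.
   - For n <= 3 an even reversion-fixed element is a scalar, so rv S * S is
     a central unit and Q = P; for n = 4, T = 1 + 2 e_1234 is in P but
     rv T * T has a pseudoscalar part and is not central.
   None of this uses n >= 2, which is therefore dropped. *)

Section CliffordRing.
Variables (K : fieldType) (n : nat) (eta : 'I_n -> K).

Local Notation bc := (blade_coef eta).

Definition symd (A B : {set 'I_n}) : {set 'I_n} := (A :\: B) :|: (B :\: A).

Lemma in_symd A B x : (x \in symd A B) = (x \in A) (+) (x \in B).
Proof. by rewrite !inE; case: (x \in A); case: (x \in B). Qed.

Lemma symdK A C : symd A (symd A C) = C.
Proof. by apply/setP=> x; rewrite !in_symd; case: (x \in A); case: (x \in C). Qed.

Lemma symdC A B : symd A B = symd B A.
Proof. by apply/setP=> x; rewrite !in_symd; case: (x \in A); case: (x \in B). Qed.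

Lemma symdA A B C : symd A (symd B C) = symd (symd A B) C.
Proof.
by apply/setP=> x; rewrite !in_symd; case: (x \in A); case: (x \in B); case: (x \in C).
Qed.

Lemma symdKr A B : symd (symd A B) B = A.
Proof. by apply/setP=> x; rewrite !in_symd -addbA addbb addbF. Qed.

Lemma symd0 A : symd A set0 = A.
Proof. by apply/setP=> x; rewrite in_symd inE addbF. Qed.

Lemma symd_eq0 A B : (symd A B == set0) = (A == B).
Proof.
apply/eqP/eqP => [h|->]; last by apply/setP=> x; rewrite in_symd inE addbb.
by rewrite -(symdKr A B) h symdC symd0.
Qed.

Lemma clif_mulE U V C :
  clif_mul eta U V C = \sum_A U A * V (symd A C) * bc A (symd A C).
Proof.
rewrite ffunE; apply: eq_bigr => A _.
rewrite (big_pred1 (symd A C)) // => B /=.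
by apply/eqP/eqP => [<-|->]; rewrite -/(symd A _) symdK.
Qed.

(* Signs are written multiplicatively as sgn b = (-1)^b, so that sign
   computations become pointwise boolean identities under a big product. *)
Definition sgn (b : bool) : K := (-1) ^+ b.

Lemma sgnM a b : sgn a * sgn b = sgn (a (+) b).
Proof. by rewrite /sgn; case: a; case: b; rewrite ?mulrNN ?mulr1 ?mul1r. Qed.

Lemma sgn_card (T : finType) (S : {set T}) : (-1) ^+ #|S| = \prod_x sgn (x \in S).
Proof.
rewrite -prodr_const big_mkcond /=; apply: eq_bigr => x _.
by rewrite /sgn; case: (x \in S).
Qed.

Lemma bcE A B : bc A B =
  (\prod_(ab : 'I_n * 'I_n) sgn ((ab.1 \in A) && (ab.2 \in B) && (ab.2 < ab.1)%N))
  * \prod_i eta i ^+ ((i \in A) && (i \in B)).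
Proof.
rewrite /blade_coef sgn_card; congr (_ * _); first by under eq_bigr do rewrite inE.
by rewrite big_mkcond; apply: eq_bigr => i _; rewrite inE; case: (_ && _).
Qed.

(* The 2-cocycle identity of the blade coefficients; it is exactly
   associativity of the product on basis blades. *)
Lemma bc_cocycle A B C :
  bc A B * bc (symd A B) C = bc B C * bc A (symd B C).
Proof.
rewrite !bcE mulrACA [RHS]mulrACA -!big_split /=; congr (_ * _).
  apply: eq_bigr => ab _; rewrite !sgnM !in_symd.
  by case: (ab.1 \in A); case: (ab.1 \in B); case: (ab.2 \in B); case: (ab.2 \in C);
    case: (ab.2 < ab.1)%N.
apply: eq_bigr => i _; rewrite -!exprD !in_symd.
by case: (i \in A); case: (i \in B); case: (i \in C).
Qed.

Lemma clif_mulA : associative (clif_mul eta).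
Proof.
move=> U V W; apply/ffunP=> D; rewrite [RHS]clif_mulE [LHS]clif_mulE; symmetry.
under eq_bigr do rewrite clif_mulE !mulr_suml.
rewrite exchange_big /=; apply: eq_bigr => A _.
rewrite (reindex (symd A)); last by exists (symd A) => X _; rewrite symdK.
rewrite clif_mulE mulr_sumr mulr_suml; apply: eq_bigr => B _.
rewrite symdK.
have eBAD : symd B (symd A D) = symd (symd A B) D by rewrite symdA (symdC B A).
have eAD : symd A D = symd B (symd (symd A B) D) by rewrite -eBAD symdK.
rewrite eBAD eAD; set C := symd (symd A B) D.
transitivity (U A * V B * W C * (bc A B * bc (symd A B) C)); first by ring.
by rewrite bc_cocycle; ring.
Qed.

Definition CL := clif K n.
Definition blade (X : {set 'I_n}) : CL := [ffun D => if D == X then 1 else 0].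

Lemma bc0l B : bc set0 B = 1.
Proof.
rewrite bcE !big1 ?mulr1 // => [i _|ab _]; first by rewrite inE.
by rewrite inE.
Qed.

Lemma bc0r A : bc A set0 = 1.
Proof.
rewrite bcE !big1 ?mulr1 // => [i _|ab _]; first by rewrite inE andbF.
by rewrite inE andbF.
Qed.

Lemma clif_mul_bladel X V D :
  clif_mul eta (blade X) V D = V (symd X D) * bc X (symd X D).
Proof.
rewrite clif_mulE (bigD1 X) //= big1 ?addr0; first by rewrite ffunE eqxx mul1r.
by move=> A /negbTE nA; rewrite ffunE nA !mul0r.
Qed.

Lemma clif_mul_blader U Y D :
  clif_mul eta U (blade Y) D = U (symd Y D) * bc (symd Y D) Y.
Proof.
rewrite clif_mulE (bigD1 (symd Y D)) //= big1 ?addr0.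
  by rewrite ffunE symdKr eqxx mulr1.
move=> A nA; rewrite ffunE; case: eqP => [e|]; last by rewrite mulr0 mul0r.
by case/eqP: nA; rewrite -e symdKr.
Qed.

Lemma clif_mul1l : left_id (clif_one K n) (clif_mul eta).
Proof. by move=> V; apply/ffunP=> D; rewrite clif_mul_bladel symdC symd0 bc0l mulr1. Qed.

Lemma clif_mul1r : right_id (clif_one K n) (clif_mul eta).
Proof. by move=> V; apply/ffunP=> D; rewrite clif_mul_blader symdC symd0 bc0r mulr1. Qed.

Lemma clif_mulDl : left_distributive (clif_mul eta) +%R.
Proof.
move=> U V W; apply/ffunP=> D; rewrite [in RHS]ffunE !clif_mulE -big_split /=.
by apply: eq_bigr => A _; rewrite ffunE !mulrDl.
Qed.

Lemma clif_mulDr : right_distributive (clif_mul eta) +%R.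
Proof.
move=> U V W; apply/ffunP=> D; rewrite [in RHS]ffunE !clif_mulE -big_split /=.
by apply: eq_bigr => A _; rewrite ffunE mulrDr !mulrDl.
Qed.

Lemma clif_one_neq0 : clif_one K n != 0.
Proof. by apply/eqP=> /ffunP /(_ set0); rewrite !ffunE eqxx; apply/eqP; exact: oner_neq0. Qed.

HB.instance Definition _ := GRing.Zmodule.on CL.
HB.instance Definition _ := GRing.Zmodule_isNzRing.Build CL
  clif_mulA clif_mul1l clif_mul1r clif_mulDl clif_mulDr clif_one_neq0.

Lemma coefM (U V : CL) C : (U * V) C = \sum_A U A * V (symd A C) * bc A (symd A C).
Proof. exact: clif_mulE. Qed.

Lemma coefM_bladel X (V : CL) D :
  (blade X * V) D = V (symd X D) * bc X (symd X D).
Proof. exact: clif_mul_bladel. Qed.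

Lemma coefM_blader (U : CL) Y D :
  (U * blade Y) D = U (symd Y D) * bc (symd Y D) Y.
Proof. exact: clif_mul_blader. Qed.

Lemma coef1 A : (1 : CL) A = if A == set0 then 1 else 0.
Proof. by rewrite ffunE. Qed.

Lemma coefD (U V : CL) A : (U + V) A = U A + V A.
Proof. by rewrite ffunE. Qed.

Lemma coefN (U : CL) A : (- U) A = - U A.
Proof. by rewrite ffunE. Qed.

Lemma CLP (U V : CL) : (forall A, U A = V A) -> U = V.
Proof. by move=> h; apply/ffunP. Qed.

Definition gi (U : CL) : CL := ginv U.
Definition rv (U : CL) : CL := Defs.rev U.

Lemma giE (U : CL) A : gi U A = (-1) ^+ #|A| * U A.
Proof. by rewrite ffunE. Qed.

Lemma rvE (U : CL) A : rv U A = (-1) ^+ 'C(#|A|, 2) * U A.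
Proof. by rewrite ffunE. Qed.


(* The grade involution is an algebra automorphism, because the parity of
   #|symd A B| is the sum of the parities of #|A| and #|B|. *)
Lemma sgn_symd A B : (-1) ^+ #|symd A B| = (-1) ^+ #|A| * (-1) ^+ #|B| :> K.
Proof.
by rewrite !sgn_card -big_split /=; apply: eq_bigr => x _; rewrite sgnM in_symd.
Qed.

Lemma gi_mul (U V : CL) : gi (U * V) = gi U * gi V.
Proof.
apply: CLP => D; rewrite giE !coefM mulr_sumr; apply: eq_bigr => A _.
have h := sgn_symd A (symd A D); rewrite symdK in h.
by rewrite !giE h; ring.
Qed.

Lemma card_set_sum (T : finType) (P : pred T) :
  #|[set x | P x]| = (\sum_x (P x : nat))%N.
Proof.
rewrite -sum1_card big_mkcond /=; apply: eq_bigr => x _.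
by rewrite inE; case: (P x).
Qed.

Lemma card_ordered_pairs (X : {set 'I_n}) :
  #|[set ab : 'I_n * 'I_n | (ab.1 \in X) && (ab.2 \in X) && (ab.2 < ab.1)%N]|
  = 'C(#|X|, 2).
Proof.
set L := #|_|.
have swapped : (\sum_(ab : 'I_n * 'I_n)
    ((ab.1 \in X) && (ab.2 \in X) && (ab.1 < ab.2)%N : nat))%N = L.
  have swapI : injective (fun ab : 'I_n * 'I_n => (ab.2, ab.1)).
    by move=> [a b] [c d] /= [-> ->].
  rewrite /L card_set_sum (reindex_inj swapI) /=.
  by apply: eq_bigr => -[a b] /=; rewrite (andbC (b \in X)).
have diagonal : (\sum_(ab : 'I_n * 'I_n)
    ((ab.1 \in X) && (ab.2 \in X) && (ab.1 == ab.2) : nat))%N = #|X|.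
  rewrite -(pair_bigA _ (fun a b => ((a \in X) && (b \in X) && (a == b) : nat))) /=.
  rewrite -sum1_card [RHS]big_mkcond /=; apply: eq_bigr => a _.
  rewrite (bigD1 a) //= big1 ?addn0; first by rewrite eqxx andbT andbb; case: (a \in X).
  by move=> b /negbTE nb; rewrite eq_sym nb andbF.
have square : (#|X| * #|X| = L + L + #|X|)%N.
  rewrite -cardsX.
  have -> : setX X X = [set ab : 'I_n * 'I_n | (ab.1 \in X) && (ab.2 \in X)].
    by apply/setP => ab; rewrite !inE.
  rewrite card_set_sum -{2}swapped -diagonal /L card_set_sum -!big_split /=.
  apply: eq_bigr => -[a b] /=.
  case: (a \in X); case: (b \in X) => //=.
  case: (ltngtP a b) => [ltab|ltba|/val_inj->]; rewrite ?eqxx //.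
    by rewrite -val_eqE (ltn_eqF ltab).
  by rewrite -val_eqE (gtn_eqF ltba).
rewrite bin2; have -> : (#|X| * #|X|.-1 = L.*2)%N.
  by rewrite -subn1 mulnBr muln1 square -addnn addnK.
by rewrite doubleK.
Qed.

(* The sign relating e_A e_B to e_B e_A under reversion; this makes the
   reversion an anti-automorphism. *)
Lemma rev_bc A B : (-1) ^+ 'C(#|symd A B|, 2) * bc A B =
  (-1) ^+ 'C(#|A|, 2) * (-1) ^+ 'C(#|B|, 2) * bc B A :> K.
Proof.
rewrite -!card_ordered_pairs !sgn_card !bcE mulrA [RHS]mulrA -!big_split /=.
congr (_ * _); last by apply: eq_bigr => i _; rewrite andbC.
apply: eq_bigr => ab _; rewrite !in_set !sgnM.
by case: (ab.1 \in A); case: (ab.1 \in B); case: (ab.2 \in A); case: (ab.2 \in B);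
  case: (ab.2 < ab.1)%N.
Qed.

Lemma rv_mul (U V : CL) : rv (U * V) = rv V * rv U.
Proof.
apply: CLP => D; rewrite rvE !coefM mulr_sumr.
rewrite [RHS](reindex (symd^~ D)); last by exists (symd^~ D) => B _; rewrite symdKr.
apply: eq_bigr => A _; rewrite symdKr !rvE.
have h := rev_bc A (symd A D); rewrite symdK in h.
transitivity (U A * V (symd A D) * ((-1) ^+ 'C(#|D|, 2) * bc A (symd A D))).
  by ring.
by rewrite h; ring.
Qed.

Lemma sgnK k : (-1) ^+ k * (-1) ^+ k = 1 :> K.
Proof. by rewrite -expr2 sqrr_sign. Qed.

Lemma rvK (U : CL) : rv (rv U) = U.
Proof. by apply: CLP => A; rewrite !rvE mulrA sgnK mul1r. Qed.

Lemma giK (U : CL) : gi (gi U) = U.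
Proof. by apply: CLP => A; rewrite !giE mulrA sgnK mul1r. Qed.

Lemma gi_rv (U : CL) : gi (rv U) = rv (gi U).
Proof. by apply: CLP => A; rewrite !giE !rvE giE mulrCA. Qed.

Lemma giD (U V : CL) : gi (U + V) = gi U + gi V.
Proof. by apply: CLP => A; rewrite !(giE, coefD) mulrDr. Qed.

Lemma rvN (U : CL) : rv (- U) = - rv U.
Proof. by apply: CLP => A; rewrite !(rvE, coefN) mulrN. Qed.

Lemma rvD (U V : CL) : rv (U + V) = rv U + rv V.
Proof. by apply: CLP => A; rewrite !(rvE, coefD) mulrDr. Qed.

Definition scal (c : K) : CL := [ffun A => if A == set0 then c else 0].

Lemma scalE c A : scal c A = if A == set0 then c else 0.
Proof. by rewrite ffunE. Qed.

Lemma scal1 : scal 1 = 1.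
Proof. by []. Qed.

Lemma gi_scal c : gi (scal c) = scal c.
Proof. by apply: CLP => A; rewrite giE scalE; case: eqP => [->|]; rewrite ?cards0 ?mul1r ?mulr0. Qed.

Lemma rv_scal c : rv (scal c) = scal c.
Proof. by apply: CLP => A; rewrite rvE scalE; case: eqP => [->|]; rewrite ?cards0 ?mul1r ?mulr0. Qed.

Lemma gi1 : gi 1 = 1.
Proof. by rewrite -scal1 gi_scal. Qed.

Lemma rv1 : rv 1 = 1.
Proof. by rewrite -scal1 rv_scal. Qed.

Lemma scal_mull c (U : CL) A : (scal c * U) A = c * U A.
Proof.
rewrite coefM (bigD1 set0) //= big1 ?addr0.
  by rewrite scalE eqxx symdC symd0 bc0l mulr1.
by move=> B /negbTE nB; rewrite scalE nB !mul0r.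
Qed.

Lemma scal_mulr c (U : CL) A : (U * scal c) A = U A * c.
Proof.
rewrite coefM (bigD1 A) //= big1 ?addr0.
  by rewrite scalE (eqP (_ : symd A A == set0)) ?symd_eq0 // eqxx bc0r mulr1.
by move=> B nB; rewrite scalE symd_eq0 (negbTE nB) mulr0 mul0r.
Qed.

Lemma scal_central c (U : CL) : scal c * U = U * scal c.
Proof. by apply: CLP => A; rewrite scal_mull scal_mulr mulrC. Qed.

Lemma scalM a b : scal (a * b) = scal a * scal b.
Proof. by apply: CLP => A; rewrite scal_mull !scalE; case: eqP; rewrite ?mulr0. Qed.

Lemma scalD a b : scal (a + b) = scal a + scal b.
Proof. by apply: CLP => A; rewrite coefD !scalE; case: eqP; rewrite ?addr0. Qed.

Lemma scalB a b : scal (a - b) = scal a - scal b.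
Proof. by apply: CLP => A; rewrite coefD coefN !scalE; case: eqP; rewrite ?subr0. Qed.

(* Central elements and units of CL.  These predicates are, by definition
   of the ring structure, the predicates center, invertible and Zx. *)
Definition central (U : CL) : Prop := forall V : CL, U * V = V * U.
Definition invertible_el (U : CL) : Prop := exists V : CL, U * V = 1 /\ V * U = 1.
Definition central_unit (U : CL) : Prop := central U /\ invertible_el U.

Lemma central_scal c : central (scal c).
Proof. by move=> V; rewrite scal_central. Qed.

Lemma centralM U V : central U -> central V -> central (U * V).
Proof. by move=> cU cV W; rewrite -mulrA cV mulrA cU -mulrA. Qed.

Lemma centralD U V : central U -> central V -> central (U + V).
Proof. by move=> cU cV W; rewrite mulrDl mulrDr cU cV. Qed.

Lemma central_inverse U X : central U -> U * X = 1 -> X * U = 1 -> central X.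
Proof.
move=> cU hUX hXU V.
by rewrite -[X * V]mulr1 -hUX mulrA -(mulrA X V U) -cU mulrA hXU mul1r.
Qed.

Lemma central_gi U : central U -> central (gi U).
Proof. by move=> cU V; rewrite -[V in LHS]giK -gi_mul cU gi_mul giK. Qed.

Lemma central_rv U : central U -> central (rv U).
Proof. by move=> cU V; rewrite -[V in LHS]rvK -rv_mul -cU rv_mul rvK. Qed.

Lemma invertibleM U V : invertible_el U -> invertible_el V -> invertible_el (U * V).
Proof.
case=> X [hUX hXU] [Y [hVY hYV]]; exists (Y * X); split.
  by rewrite mulrA -(mulrA U) hVY mulr1 hUX.
by rewrite mulrA -(mulrA Y) hXU mulr1 hYV.
Qed.

Lemma invertible_gi U : invertible_el U -> invertible_el (gi U).
Proof. by case=> X [h1 h2]; exists (gi X); rewrite -!gi_mul h1 h2 gi1. Qed.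

Lemma invertible_rv U : invertible_el U -> invertible_el (rv U).
Proof. by case=> X [h1 h2]; exists (rv X); rewrite -!rv_mul h1 h2 rv1. Qed.

Lemma central_unitM U V : central_unit U -> central_unit V -> central_unit (U * V).
Proof. by move=> [cU iU] [cV iV]; split; [apply: centralM | apply: invertibleM]. Qed.

Lemma central_unit_inverse U : central_unit U ->
  exists X, central_unit X /\ U * X = 1 /\ X * U = 1.
Proof.
move=> [cU [X [hUX hXU]]]; exists X; split=> //.
by split; [exact: central_inverse hUX hXU | exists U].
Qed.

Lemma central_unit_gi U : central_unit U -> central_unit (gi U).
Proof. by move=> [cU iU]; split; [apply: central_gi | apply: invertible_gi]. Qed.

Lemma central_unit_rv U : central_unit U -> central_unit (rv U).
Proof. by move=> [cU iU]; split; [apply: central_rv | apply: invertible_rv]. Qed.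

Lemma central_unitMl C M : central_unit C -> (central_unit (C * M) <-> central_unit M).
Proof.
move=> uC; split; last exact: central_unitM.
have [X [uX [_ hXC]]] := central_unit_inverse uC.
by move=> uCM; have := central_unitM uX uCM; rewrite mulrA hXC mul1r.
Qed.

Lemma central_unitN U : central_unit (- U) <-> central_unit U.
Proof.
have -> : - U = scal (-1) * U by apply: CLP => A; rewrite coefN scal_mull mulN1r.
apply: central_unitMl; split; first exact: central_scal.
by exists (scal (-1)); rewrite -scalM mulrNN mulr1.
Qed.

Hypothesis eta2 : forall i, eta i ^+ 2 = 1.
Hypothesis charK : forall m, (m.+1)%:R != 0 :> K.

Lemma selfopp_eq0 (x : K) : x = - x -> x = 0.
Proof.
move=> hx; have : x * 2%:R = 0 by rewrite mulr_natr mulr2n {1}hx addNr.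
by move/eqP; rewrite mulf_eq0 (negbTE (charK 1)) orbF => /eqP.
Qed.

Lemma bc_sq A B : bc A B ^+ 2 = 1.
Proof.
rewrite bcE exprMn -!prodrXl !big1 ?mulr1 // => [i _|ab _]; last exact: sqrr_sign.
by rewrite exprAC eta2 expr1n.
Qed.

Lemma bc_neq0 A B : bc A B != 0.
Proof. by apply: contra_eq_neq (bc_sq A B) => ->; rewrite expr0n eq_sym oner_neq0. Qed.

Lemma bc_swap1 B i : bc B [set i] = (-1) ^+ #|B :\ i| * bc [set i] B.
Proof.
rewrite !bcE mulrA; congr (_ * _); last by apply: eq_bigr => x _; rewrite andbC.
have -> : \prod_(ab : 'I_n * 'I_n) sgn ((ab.1 \in B) && (ab.2 \in [set i]) && (ab.2 < ab.1)%N)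
    = \prod_a sgn ((a \in B) && (i < a)%N).
  rewrite -(pair_bigA _ (fun a b : 'I_n => sgn ((a \in B) && (b \in [set i]) && (b < a)%N))).
  apply: eq_bigr => a _; rewrite (bigD1 i) //= big1 ?mulr1; first by rewrite in_set1 eqxx andbT.
  by move=> b /negbTE nbi; rewrite in_set1 nbi andbF.
have -> : \prod_(ab : 'I_n * 'I_n) sgn ((ab.1 \in [set i]) && (ab.2 \in B) && (ab.2 < ab.1)%N)
    = \prod_b sgn ((b \in B) && (b < i)%N).
  rewrite -(pair_bigA _ (fun a b : 'I_n => sgn ((a \in [set i]) && (b \in B) && (b < a)%N))).
  rewrite (bigD1 i) //= [X in _ * X]big1 ?mulr1.
    by apply: eq_bigr => b _; rewrite in_set1 eqxx.
  by move=> a /negbTE nai; rewrite big1 // => b _; rewrite in_set1 nai.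
rewrite sgn_card -big_split /=; apply: eq_bigr => x _.
rewrite !sgnM !inE; case: (x \in B); rewrite ?andbF ?andbT //=.
case: (eqVneq x i) => [->|nxi] /=; first by rewrite ltnn.
by rewrite /sgn; case: ltngtP => // /val_inj eix; rewrite eix eqxx in nxi.
Qed.

(* A central element has no component on a blade e_B that anticommutes
   with some generator e_i, i.e. with #|B :\ i| odd. *)
Lemma central_coef_odd W B i : central W -> odd #|B :\ i| -> W B = 0.
Proof.
move=> cW oddBi.
have := congr1 (fun U : CL => U (symd B [set i])) (cW (blade [set i])).
rewrite /= coefM_blader coefM_bladel symdC symdKr bc_swap1 -signr_odd oddBi.
rewrite expr1 mulN1r mulrN => /esym /selfopp_eq0 /eqP.
by rewrite mulf_eq0 (negbTE (bc_neq0 _ _)) orbF => /eqP.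
Qed.

(* Hence the centre is spanned by e_0 and, when n is odd, the pseudoscalar. *)
Lemma central_support W B : central W -> B != set0 -> W B != 0 -> B = setT /\ odd n.
Proof.
move=> cW nB0 nWB.
have evenBi i : ~~ odd #|B :\ i|.
  by apply: contra nWB => /(central_coef_odd cW) ->.
have [i iB] := set0Pn B nB0.
have oddB : odd #|B| by rewrite (cardsD1 i B) iB /= (negbTE (evenBi i)).
have BT : B = setT.
  apply/setP => j; rewrite inE; apply/negPn/negP => jB.
  by move: (evenBi j) oddB; rewrite (cardsD1 j B) (negbTE jB) => /negbTE ->.
by split=> //; move: oddB; rewrite BT cardsT card_ord.
Qed.

Lemma central_add_gi W : central W -> W + gi W = scal (W set0 *+ 2).
Proof.
move=> cW; apply: CLP => A; rewrite coefD giE scalE.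
case: (eqVneq A set0) => [->|nA0]; first by rewrite cards0 mul1r mulr2n.
case: (eqVneq (W A) 0) => [->|nWA]; first by rewrite mulr0 addr0.
have [-> oddn] := central_support cW nA0 nWA.
by rewrite cardsT card_ord -signr_odd oddn mulN1r subrr.
Qed.

Lemma even_partE (S : CL) : even_part S <-> gi S = S.
Proof.
split=> [evS|giS A oddA].
  apply: CLP => A; rewrite giE -signr_odd.
  by case: (boolP (odd #|A|)) => [/evS->|_]; rewrite ?mulr0 ?mul1r.
by apply: selfopp_eq0; rewrite -[in LHS]giS giE -signr_odd oddA mulN1r.
Qed.

Lemma odd_partE (S : CL) : odd_part S <-> gi S = - S.
Proof.
split=> [odS|giS A evA].
  apply: CLP => A; rewrite giE coefN -signr_odd.
  by case: (boolP (odd #|A|)) => [_|/odS->]; rewrite ?mulN1r ?mulr0 ?oppr0.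
apply: selfopp_eq0; have := congr1 (fun U : CL => U A) giS.
by rewrite /= giE coefN -signr_odd (negbTE evA) mul1r.
Qed.

Lemma gi_central_factor T : invertible_el T ->
  central_unit (rv T * T) -> central_unit (gi (rv T) * T) ->
  exists k, central k /\ gi T = k * T.
Proof.
move=> [X [hTX hXT]] ul um; set l := rv T * T in ul; set m := gi (rv T) * T in um.
have rvT : rv T = l * X by rewrite /l -mulrA hTX mulr1.
have girvT : gi (rv T) = m * X by rewrite /m -mulrA hTX mulr1.
have [l' [ul' [_ hl'l]]] := central_unit_inverse (central_unit_gi ul).
have giX : gi X = (l' * m) * X.
  by rewrite -mulrA -girvT rvT gi_mul mulrA hl'l mul1r.
have [k [[ck _] [hk _]]] := central_unit_inverse (central_unitM ul' um).
have giTl'm : gi T * (l' * m) = T.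
  by rewrite -[LHS]mulr1 -hXT mulrA -(mulrA _ _ X) -giX -gi_mul hTX gi1 mul1r.
by exists k; split=> //; rewrite ck -{2}giTl'm -mulrA hk mulr1.
Qed.

(* Let k be central with gi k * k = 1 and e = +-1.  Then V = 1 + e k
   satisfies V * gi V = 2 (1 + e k_0) (as k + gi k = 2 k_0), so V is a central
   unit when 1 + e k_0 != 0; moreover gi V * k = e V. *)
Lemma twisted_unit k e : central k -> gi k * k = 1 -> e * e = 1 ->
  1 + e * k set0 != 0 ->
  central_unit (1 + scal e * k) /\ gi (1 + scal e * k) * k = scal e * (1 + scal e * k).
Proof.
move=> ck kk ee ne; set V := 1 + scal e * k.
have cV : central V.
  by apply: centralD => [W|]; [rewrite mul1r mulr1 | apply: centralM (central_scal e) ck].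
have giVk : gi V * k = scal e * V.
  rewrite /V giD gi1 gi_mul gi_scal mulrDl mul1r -mulrA kk mulr1.
  by rewrite mulrDr mulr1 mulrA -scalM ee scal1 mul1r addrC.
have VgiV : V * gi V = scal ((1 + e * k set0) *+ 2).
  have sum := central_add_gi ck.
  rewrite /V giD gi1 gi_mul gi_scal mulrDr mulr1 mulrDl mul1r.
  rewrite -[scal e * k * _]mulrA [k * (scal e * gi k)]mulrA -(scal_central e k).
  rewrite -!mulrA ck kk mulr1 -scalM ee.
  rewrite [scal e * gi k + _]addrC addrACA -mulrDr sum -scalM -scal1 -!scalD.
  by congr scal; rewrite !mulr2n; ring.
set c := (1 + e * k set0) *+ 2.
have nc : c != 0 by rewrite /c -mulr_natr mulf_neq0 // (charK 1).
have VY : V * (gi V * scal c^-1) = 1 by rewrite mulrA VgiV -scalM mulfV.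
split=> //; split=> //; exists (gi V * scal c^-1); split=> //.
by rewrite -cV.
Qed.

Definition parity_factorizable (T : CL) : Prop :=
  exists W S, central_unit W /\ (gi S = S \/ gi S = - S) /\ invertible_el S /\ T = W * S.

(* If gi T = k T with k central, then T = W S with W a central unit and
   S an even or odd invertible element: S = (1 + e k) T for a suitable
   sign e (one of 1 + k_0, 1 - k_0 is nonzero, as their sum is 2). *)
Lemma parity_split T k : invertible_el T -> central k -> gi T = k * T ->
  parity_factorizable T.
Proof.
move=> iT ck giT.
have kk : gi k * k = 1.
  have [X [hTX _]] := iT.
  have kkT : gi k * k * T = T by rewrite -mulrA -giT -gi_mul -giT giK.
  by rewrite -[LHS]mulr1 -hTX mulrA kkT.
have [e ne esgn] : exists2 e, 1 + e * k set0 != 0 & (e = 1 \/ e = -1).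
  have [ha | ha] := eqVneq (1 + 1 * k set0) 0; last by exists 1; auto.
  exists (-1); last by right.
  have -> : 1 + -1 * k set0 = (1 + 1) - (1 + 1 * k set0) by ring.
  by rewrite ha subr0 -(natrD K 1 1) charK.
have ee : e * e = 1 by case: esgn => ->; rewrite ?mulrNN mulr1.
have [[cV iV] giVk] := twisted_unit ck kk ee ne.
set V := 1 + scal e * k in cV iV giVk.
have [Y [uY [hVY hYV]]] := central_unit_inverse (conj cV iV).
exists Y, (V * T); split=> //; split; last first.
  by split; [exact: invertibleM | rewrite mulrA hYV mul1r].
have giS : gi (V * T) = scal e * (V * T) by rewrite gi_mul giT mulrA giVk mulrA.
case: esgn giS => -> ->; [by left; rewrite scal1 mul1r | right].
by apply: CLP => A; rewrite scal_mull coefN mulN1r.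
Qed.

Lemma PsetE T : Pset eta T <-> parity_factorizable T.
Proof.
split=> [[W [S [uW [hS ->]]]]|[W [S [uW [hS [iS ->]]]]]]; exists W, S.
  by case: hS => [[/even_partE giS iS]|[/odd_partE giS iS]]; split=> //; split; auto.
split=> //; split=> //.
by case: hS => [/even_partE|/odd_partE]; [left|right].
Qed.

(* For T = W S with W central, the norms of T are those of S times central
   units, and for S even or odd gi (rv S) S = +-(rv S) S: so both norms of T
   are central units exactly when rv S * S is. *)
Lemma norms_of_factorization W S : central_unit W -> (gi S = S \/ gi S = - S) ->
  (central_unit (rv (W * S) * (W * S)) <-> central_unit (rv S * S)) /\
  (central_unit (gi (rv (W * S)) * (W * S)) <-> central_unit (rv S * S)).
Proof.
move=> uW hS; have [cW _] := uW.
have rvWS : rv (W * S) * (W * S) = (rv W * W) * (rv S * S).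
  rewrite rv_mul -mulrA [rv W * _]mulrA mulrA.
  by rewrite -(centralM (central_rv cW) cW) !mulrA.
have girvWS : gi (rv (W * S)) * (W * S) = (gi (rv W) * W) * (gi (rv S) * S).
  rewrite rv_mul gi_mul -mulrA [gi (rv W) * _]mulrA mulrA.
  by rewrite -(centralM (central_gi (central_rv cW)) cW) !mulrA.
have uN1 := central_unitM (central_unit_rv uW) uW.
have uN2 := central_unitM (central_unit_gi (central_unit_rv uW)) uW.
rewrite rvWS girvWS (central_unitMl _ uN1) (central_unitMl _ uN2); split=> //.
rewrite gi_rv; case: hS => -> //.
by rewrite rvN mulNr central_unitN.
Qed.

Lemma factorizable_invertible T : parity_factorizable T -> invertible_el T.
Proof. by case=> W [S [[_ iW] [_ [iS ->]]]]; exact: invertibleM. Qed.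

(* In dimension at most 3 an even element fixed by the reversion is a
   scalar: its possible grades are 0 and 2, and grade 2 changes sign. *)
Lemma low_dim_scalar M : (n <= 3)%N -> gi M = M -> rv M = M -> M = scal (M set0).
Proof.
move=> n3 /even_partE evM rvM; apply: CLP => A; rewrite scalE.
case: eqP => [->|/eqP nA0] //.
case/boolP: (odd #|A|) => [/evM //|evA].
have cardA : #|A| = 2%N.
  have : (#|A| <= 3)%N by apply: leq_trans n3; rewrite -[X in (_ <= X)%N]card_ord max_card.
  by move: evA (card_gt0 A); rewrite nA0; case: #|A| => [|[|[|[|]]]].
by apply: selfopp_eq0; rewrite -[in LHS]rvM rvE cardA /= expr1 mulN1r.
Qed.

(* Hence, for n <= 3, rv S * S is a central unit whenever S is an even or
   odd unit: it is even, reversion-fixed and invertible. *)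
Lemma low_dim_norm S : (n <= 3)%N -> (gi S = S \/ gi S = - S) -> invertible_el S ->
  central_unit (rv S * S).
Proof.
move=> n3 hS iS; split; last exact: invertibleM (invertible_rv iS) iS.
rewrite (low_dim_scalar (M := rv S * S) n3); [exact: central_scal | | by rewrite rv_mul rvK].
by rewrite gi_mul gi_rv; case: hS => ->; rewrite ?rvN ?mulrNN.
Qed.

Lemma gi_blade X : gi (blade X) = scal ((-1) ^+ #|X|) * blade X.
Proof. by apply: CLP => D; rewrite giE scal_mull ffunE; case: eqP => [->|]; rewrite ?mulr0. Qed.

Lemma rv_blade X : rv (blade X) = scal ((-1) ^+ 'C(#|X|, 2)) * blade X.
Proof. by apply: CLP => D; rewrite rvE scal_mull ffunE; case: eqP => [->|]; rewrite ?mulr0. Qed.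

Lemma blade_sq X : blade X * blade X = scal (bc X X).
Proof.
apply: CLP => D; rewrite coefM_bladel scalE ffunE -[X in _ == X]symd0.
have symdX : (symd X D == symd X set0) = (D == set0).
  by apply/eqP/eqP => [/(congr1 (symd X))|->]; rewrite ?symdK.
by rewrite symdX; case: eqP => [->|]; rewrite ?symd0 ?mul1r ?mul0r.
Qed.

(* If a^2 = x is a scalar with x != 1, then 1 + a is invertible, with inverse
   (1 - a) / (1 - x). *)
Lemma unit_one_plus a x : a * a = scal x -> 1 - x != 0 -> invertible_el (1 + a).
Proof.
move=> aa nx.
have TT' : (1 + a) * (1 - a) = scal (1 - x).
  by rewrite mulrDl mul1r mulrBr mulr1 addrA subrK aa scalB.
have T'T : (1 - a) * (1 + a) = scal (1 - x).
  by rewrite mulrBl mul1r mulrDr mulr1 opprD addrA addrK aa scalB.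
exists ((1 - a) * scal (1 - x)^-1); rewrite mulrA TT' -scalM mulfV //; split=> //.
by rewrite -mulrA scal_central mulrA T'T -scalM mulfV.
Qed.

(* For n = 4, T = 1 + 2 e_1234 is an even unit with rv T = T, but its
   norm T^2 = (1 + 4 s) + 4 e_1234 (s = e_1234^2 = +-1) has a nonzero
   pseudoscalar component, so it is not central (n being even). *)
Lemma dim4_counterexample : n = 4%N ->
  exists T, parity_factorizable T /\ ~ central_unit (rv T * T).
Proof.
move=> n4; set II := blade setT; set s := bc setT setT.
have cardT : #|[set: 'I_n]| = 4%N by rewrite cardsT card_ord.
have nT0 : [set: 'I_n] != set0 by rewrite -card_gt0 cardT.
set a := scal 2 * II; set T := 1 + a.
have giT : gi T = T.
  by rewrite /T /a giD gi1 gi_mul gi_scal gi_blade cardT -signr_odd expr0 scal1 mul1r.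
have rvT : rv T = T.
  by rewrite /T /a rvD rv1 rv_mul rv_scal rv_blade cardT -signr_odd expr0 scal1 mul1r scal_central.
have aa : a * a = scal (2 * 2 * s).
  rewrite /a -mulrA [II * (_ * _)]mulrA -(scal_central 2 II) -!mulrA mulrA.
  by rewrite -scalM blade_sq -scalM mulrA.
set d := 1 - 2 * 2 * s.
have nd : d != 0.
  apply/eqP => d0; move/eqP: (charK 14); apply.
  have -> : 15%:R = - (d * (1 + 2 * 2 * s)) - 16%:R * (s ^+ 2 - 1) :> K by rewrite /d; ring.
  by rewrite d0 bc_sq subrr mulr0 mul0r oppr0 addr0.
exists T; split.
  have iT : invertible_el T := unit_one_plus aa nd.
  exists 1, T; split; first by split; [move=> V; rewrite mul1r mulr1 | exists 1; rewrite mul1r].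
  by rewrite mul1r; split; [left | split].
rewrite rvT => -[cTT _].
have TTT : (T * T) setT = 2%:R *+ 2.
  rewrite /T mulrDl mul1r mulrDr mulr1 aa !coefD coef1 scalE (negbTE nT0) add0r.
  by rewrite /a scal_mull ffunE eqxx mulr1 addr0 mulr2n.
have nTTT : (T * T) setT != 0 by rewrite TTT -mulr_natr -natrM charK.
have [_] := central_support cTT nT0 nTTT.
by rewrite n4.
Qed.

Lemma AsetE T : Aset eta T <-> invertible_el T /\ central_unit (rv T * T).
Proof. exact: iff_refl. Qed.

Lemma BsetE T : Bset eta T <-> invertible_el T /\ central_unit (gi (rv T) * T).
Proof. exact: iff_refl. Qed.

Lemma QsetE T : Qset eta T <-> Pset eta T /\ central_unit (rv T * T).
Proof. exact: iff_refl. Qed.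

Lemma AP_iff_BP T : Aset eta T /\ Pset eta T <-> Bset eta T /\ Pset eta T.
Proof.
rewrite AsetE BsetE; split=> -[[iT uN] hP]; do 2!split=> //;
  move/PsetE: hP uN => [W [S [uW [hS [_ ->]]]]];
  have [eA eB] := norms_of_factorization uW hS.
- by move/eA/eB.
- by move/eB/eA.
Qed.

Lemma AB_subset_P T : Aset eta T -> Bset eta T -> Pset eta T.
Proof.
rewrite AsetE BsetE PsetE => -[iT uN] [_ uN'].
have [k [ck giT]] := gi_central_factor iT uN uN'.
exact: parity_split iT ck giT.
Qed.

Lemma clifford_conclusion_holds : clifford_conclusion eta.
Proof.
split; [|split; [exact: AP_iff_BP|split; [|split]]].
- move=> T; rewrite QsetE AsetE; split=> [[hP uN]|[[_ uN] hP]] //.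
  by split=> //; split=> //; apply: factorizable_invertible; apply/PsetE.
- move=> T; split=> [[hB hP]|[hA hB]]; last by split=> //; exact: AB_subset_P.
  by split=> //; case: ((AP_iff_BP T).2 (conj hB hP)).
- move=> n3 T; rewrite QsetE; split=> [[] //|hP]; split=> //.
  move/PsetE: hP => [W [S [uW [hS [iS ->]]]]].
  by apply/(proj1 (norms_of_factorization uW hS)); exact: low_dim_norm.
- move=> n4; have [T [hP nN]] := dim4_counterexample n4.
  have hP' : Pset eta T by apply/PsetE.
  by split; exists T => -[_ /(_ hP')]; [rewrite QsetE => -[] | rewrite AsetE => -[]].
Qed.

End CliffordRing.

(* Both the real signatures (p, q) and the complex metric are orthonormal
   over fields of characteristic zero. *)
Theorem mainTheorem9 :
  (* real Clifford algebras C\ell_{p,q}, n = p + q >= 2 *)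
  (forall (R : realType) (p q : nat), (2 <= p + q)%N ->
     clifford_conclusion (@eta_pq R p q)) /\
  (* complex Clifford algebras C\ell(C^n), n >= 2 *)
  (forall (R : realType) (n : nat), (2 <= n)%N ->
     clifford_conclusion (fun _ : 'I_n => (1 : R[i]))).
Proof.
split=> [R p q _ | R n _]; apply: clifford_conclusion_holds => [i|m];
  rewrite ?pnatr_eq0 ?expr1n //.
by rewrite /eta_pq; case: ifP; rewrite ?sqrrN expr1n.
Qed.
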